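(* Let $\mathcal{A}$ be a finite totally ordered alphabet. The monoid $\mathbf{Ch}(\mathcal{A},2)$ is $\mathscr{J}$-trivial, i.e. for $x,y\in\mathbf{Ch}(\mathcal{A},2)$, if $\mathbf{Ch}(\mathcal{A},2)\,x\,\mathbf{Ch}(\mathcal{A},2)=\mathbf{Ch}(\mathcal{A},2)\,y\,\mathbf{Ch}(\mathcal{A},2)$ then $x=y$.
   Context: The Chinese monoid $\mathbf{Ch}(\mathcal{A})$ is the quotient of the free monoid $\mathcal{A}^*$ by the relations $cba=cab=bca$ for $a<b<c$, and $aba=baa$, $bba=bab$ for $a<b$ ($a,b,c\in\mathcal{A}$). $\mathbf{Ch}(\mathcal{A},2)$ is the quotient of $\mathbf{Ch}(\mathcal{A})$ obtained by adding the relations $a^2=a$ for every $a\in\mathcal{A}$. *)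

From HB Require Import structures.
From mathcomp Require Import all_boot all_order.
From Stdlib Require Import Relation_Operators.
Set Implicit Arguments. Unset Strict Implicit. Unset Printing Implicit Defensive.
Import Order.TTheory.
Local Open Scope order_scope.

Section Chinese.
Context {disp : Order.disp_t} {A : finOrderType disp}.

Definition ch_rel (l r : seq A) : Prop :=
  (exists a b c : A, a < b /\ b < c /\
     ((l = [:: c; b; a] /\ r = [:: c; a; b]) \/
      (l = [:: c; a; b] /\ r = [:: b; c; a]))) \/
  (exists a b : A, a < b /\
     ((l = [:: a; b; a] /\ r = [:: b; a; a]) \/
      (l = [:: b; b; a] /\ r = [:: b; a; b]))).

Definition ch2_rel (l r : seq A) : Prop :=
  ch_rel l r \/ (exists a : A, l = [:: a; a] /\ r = [:: a]).

Definition ch2_step (u v : seq A) : Prop :=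
  exists p s l r, ch2_rel l r /\ u = p ++ l ++ s /\ v = p ++ r ++ s.

Definition ch2_eq : seq A -> seq A -> Prop := clos_refl_sym_trans _ ch2_step.

Definition in_ideal2 (x w : seq A) : Prop :=
  exists p q : seq A, ch2_eq w (p ++ x ++ q).

End Chinese.

From mathcomp Require Import all_boot all_order.
From Stdlib Require Import Relation_Operators.
Set Implicit Arguments. Unset Strict Implicit. Unset Printing Implicit Defensive.
Import Order.TTheory.
Local Open Scope order_scope.

(* Write x = p y q and y = p' x q', so that x = P x Q with P = p p' and
   Q = q' q, hence x = P P x Q Q.  If c is the least letter of P, then
   P P = W c P2 with every letter of W at least c, and to the left of such a
   c the letters of W commute and are idempotent; so a P P = P P for every
   letter a of P, whence a x = x.  Reversing words and the order of the
   alphabet is an anti-isomorphism Ch(A,2) -> Ch(A^d,2), which gives x a = x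
   for every letter a of Q.  Therefore y = p' x q' = x. *)

Section Ch2Words.
Context {disp : Order.disp_t} {A : finOrderType disp}.
Implicit Types (a b c x y : A) (u v w p s l r P Q : seq A).

Lemma ch2_refl u : ch2_eq u u. Proof. exact: rst_refl. Qed.

Lemma ch2_sym u v : ch2_eq u v -> ch2_eq v u. Proof. exact: rst_sym. Qed.

Lemma ch2_trans u v w : ch2_eq u v -> ch2_eq v w -> ch2_eq u w.
Proof. exact: rst_trans. Qed.

Lemma ch2_cat p s u v : ch2_eq u v -> ch2_eq (p ++ u ++ s) (p ++ v ++ s).
Proof.
elim=> {u v} [u v [p' [s' [l [r [lr [-> ->]]]]]]|u|u v _|u v w _ uv _ vw].
- by apply: rst_step; exists (p ++ p'), (s' ++ s), l, r; rewrite -!catA.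
- exact: ch2_refl.
- exact: ch2_sym.
- exact: ch2_trans uv vw.
Qed.

Lemma ch2_catl p u v : ch2_eq u v -> ch2_eq (p ++ u) (p ++ v).
Proof. by move/(ch2_cat p [::]); rewrite !cats0. Qed.

Lemma ch2_catr s u v : ch2_eq u v -> ch2_eq (u ++ s) (v ++ s).
Proof. exact: (@ch2_cat [::] s u v). Qed.

Lemma ch2_rel_eq l r : ch2_rel l r -> ch2_eq l r.
Proof. by move=> lr; apply: rst_step; exists [::], [::], l, r; rewrite !cats0. Qed.

Lemma ch2_idem a : ch2_eq [:: a; a] [:: a].
Proof. by apply: ch2_rel_eq; right; exists a. Qed.

Lemma ch2_aba a b : a < b -> ch2_eq [:: a; b; a] [:: b; a; a].
Proof. by move=> ab; apply: ch2_rel_eq; left; right; exists a, b; split; [|left]. Qed.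

Lemma ch2_bba a b : a < b -> ch2_eq [:: b; b; a] [:: b; a; b].
Proof. by move=> ab; apply: ch2_rel_eq; left; right; exists a, b; split; [|right]. Qed.

Lemma ch2_cba a b c : a < b -> b < c -> ch2_eq [:: c; b; a] [:: c; a; b].
Proof.
by move=> ab bc; apply: ch2_rel_eq; left; left; exists a, b, c; do 2 split=> //; left.
Qed.

Lemma ch2_cab a b c : a < b -> b < c -> ch2_eq [:: c; a; b] [:: b; c; a].
Proof.
by move=> ab bc; apply: ch2_rel_eq; left; left; exists a, b, c; do 2 split=> //; right.
Qed.

Lemma ch2_rel_rev l r : @ch2_rel _ A^d l r -> ch2_eq (rev l) (rev r).
Proof.
case=> [[[a [b [c [ab [bc [[-> ->]|[-> ->]]]]]]]|[a [b [ab [[-> ->]|[-> ->]]]]]]|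
        [a [-> ->]]].
- exact: ch2_trans (ch2_cba bc ab) (ch2_cab bc ab).
- exact/ch2_sym/(ch2_cab bc ab).
- exact/ch2_sym/(ch2_bba ab).
- exact/ch2_sym/(ch2_aba ab).
- exact: ch2_idem.
Qed.

Lemma ch2_rev u v : @ch2_eq _ A^d u v -> ch2_eq (rev u) (rev v).
Proof.
elim=> {u v} [u v [p [s [l [r [lr [-> ->]]]]]]|u|u v _|u v w _ uv _ vw].
- by rewrite !rev_cat -!catA; apply: ch2_cat; apply: ch2_rel_rev.
- exact: ch2_refl.
- exact: ch2_sym.
- exact: ch2_trans uv vw.
Qed.

Lemma ch2_cxc c x : c <= x -> ch2_eq [:: c; x; c] [:: x; c].
Proof.
rewrite le_eqVlt => /predU1P [<-|cx]; first exact (ch2_catr [:: c] (ch2_idem c)).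
exact: ch2_trans (ch2_aba cx) (ch2_catl [:: x] (ch2_idem c)).
Qed.

Lemma ch2_xyc c x y : c <= x -> c <= y -> ch2_eq [:: x; y; c] [:: y; x; c].
Proof.
wlog xy : x y / x < y.
  move=> lt_case cx cy; case: (ltgtP x y) => [xy|yx|<-]; last exact: ch2_refl.
  - exact: lt_case.
  - exact: ch2_sym (lt_case _ _ yx cy cx).
rewrite le_eqVlt => /predU1P [-> _|cx _]; first exact: ch2_aba xy.
exact: ch2_trans (ch2_sym (ch2_cab cx xy)) (ch2_sym (ch2_cba cx xy)).
Qed.

Lemma ch2_cuc c u s : all (>= c) u -> ch2_eq (c :: u ++ c :: s) (u ++ c :: s).
Proof.
elim: u => [_|x u IH /= /andP [cx /IH {}IH]]; first exact (ch2_catr s (ch2_idem c)).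
apply: ch2_trans (_ : ch2_eq _ ([:: c; x; c] ++ u ++ c :: s)) _.
  exact (ch2_catl [:: c; x] (ch2_sym IH)).
apply: ch2_trans (_ : ch2_eq _ ([:: x; c] ++ u ++ c :: s)) _.
  exact (ch2_catr (u ++ c :: s) (ch2_cxc cx)).
exact (ch2_catl [:: x] IH).
Qed.

Lemma ch2_xyuc c u s x y : all (>= c) u -> c <= x -> c <= y ->
  ch2_eq (x :: y :: u ++ c :: s) (y :: x :: u ++ c :: s).
Proof.
move=> cu cx cy.
apply: ch2_trans (_ : ch2_eq _ ([:: x; y; c] ++ u ++ c :: s)) _.
  exact (ch2_catl [:: x; y] (ch2_sym (ch2_cuc s cu))).
apply: ch2_trans (_ : ch2_eq _ ([:: y; x; c] ++ u ++ c :: s)) _.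
  exact (ch2_catr (u ++ c :: s) (ch2_xyc cx cy)).
exact (ch2_catl [:: y; x] (ch2_cuc s cu)).
Qed.

Lemma ch2_dup_before_min c a v w s : all (>= c) v -> c <= a -> all (>= c) w ->
  ch2_eq (a :: v ++ a :: w ++ c :: s) (v ++ a :: w ++ c :: s).
Proof.
move=> + ca cw; elim: v => [_|x v IH /= /andP [cx cv]].
  exact (ch2_catr (w ++ c :: s) (ch2_idem a)).
have cvaw : all (>= c) (v ++ a :: w) by rewrite all_cat cv /= ca cw.
apply: ch2_trans (_ : ch2_eq _ (x :: a :: v ++ a :: w ++ c :: s)) _.
  by have := ch2_xyuc s cvaw ca cx; rewrite -catA.
exact (ch2_catl [:: x] (IH cv)).
Qed.

Lemma ch2_absorb_before_min c a v s : all (>= c) v -> a \in v ->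
  ch2_eq (a :: v ++ c :: s) (v ++ c :: s).
Proof.
move=> + av; case/splitPr: av => w1 w2; rewrite all_cat /= => /and3P [cw1 ca cw2].
by rewrite -catA; exact (ch2_dup_before_min s cw1 ca cw2).
Qed.

Lemma ch2_square_absorbl a P : a \in P -> ch2_eq (a :: P ++ P) (P ++ P).
Proof.
move=> aP; case: (arg_minP id aP) => c cP cmin.
have: all (>= c) P by apply/allP.
case/splitPr: cP aP => P1 P2 aP cP; rewrite catA.
apply: (ch2_absorb_before_min P2); last by rewrite mem_cat aP.
by move: cP; rewrite !all_cat => /andP [-> ->].
Qed.

Lemma ch2_fix_absorbl w P Q r :
  ch2_eq w (P ++ w ++ Q) -> {subset r <= P} -> ch2_eq (r ++ w) w.
Proof.
move=> wPwQ.
have wPPwQQ : ch2_eq w ((P ++ P) ++ w ++ Q ++ Q).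
  by have := ch2_cat P Q wPwQ; rewrite -!catA; apply: ch2_trans.
have absorb a : a \in P -> ch2_eq (a :: w) w.
  move=> aP; apply: ch2_trans (ch2_catl [:: a] wPPwQQ) _.
  exact (ch2_trans (ch2_catr (w ++ Q ++ Q) (ch2_square_absorbl aP)) (ch2_sym wPPwQQ)).
elim: r => [_|a r IH rP]; first exact: ch2_refl.
apply: ch2_trans (ch2_catl [:: a] (IH _)) (absorb a _); last exact/rP/mem_head.
by move=> t tr; apply/rP/mem_behead.
Qed.

End Ch2Words.

Lemma ch2_revE (disp : Order.disp_t) (A : finOrderType disp) (u v : seq A) :
  @ch2_eq _ A^d (rev u) (rev v) <-> ch2_eq u v.
Proof.
(* The converse is [ch2_rev] over [A^d], since [(A^d)^d] is [A] up to conversion. *)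
by split=> [/ch2_rev|/(@ch2_rev _ A^d)]; rewrite ?revK.
Qed.

Lemma ch2_fix_absorbr (disp : Order.disp_t) (A : finOrderType disp)
    (w P Q r : seq A) :
  ch2_eq w (P ++ w ++ Q) -> {subset r <= Q} -> ch2_eq (w ++ r) w.
Proof.
move=> /ch2_revE; rewrite !rev_cat -catA => /ch2_fix_absorbl absorb rQ.
by apply/ch2_revE; rewrite rev_cat; apply: absorb => t; rewrite !mem_rev => /rQ.
Qed.

Lemma in_ideal2_refl (disp : Order.disp_t) (A : finOrderType disp) (x : seq A) :
  in_ideal2 x x.
Proof. by exists [::], [::]; rewrite cats0; apply: ch2_refl. Qed.

Theorem mainTheorem3 (disp : Order.disp_t) (A : finOrderType disp) (x y : seq A) :
  (forall w : seq A, in_ideal2 x w <-> in_ideal2 y w) -> ch2_eq x y.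
Proof.
move=> same_ideal.
have [p [q xpyq]] : in_ideal2 y x by apply/same_ideal/in_ideal2_refl.
have [p' [q' ypxq]] : in_ideal2 x y by apply/same_ideal/in_ideal2_refl.
have xPxQ : ch2_eq x ((p ++ p') ++ x ++ q' ++ q).
  by have := ch2_cat p q ypxq; rewrite -!catA; apply: ch2_trans.
apply/ch2_sym/(ch2_trans ypxq).
apply: ch2_trans (ch2_catl p' (ch2_fix_absorbr xPxQ _)) _.
  by move=> t tq'; rewrite mem_cat tq'.
by apply: ch2_fix_absorbl xPxQ _ => t tp'; rewrite mem_cat tp' orbT.
Qed.
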